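(* Let $m\ge 38$ be even and let $G$ be a graph with maximum spectral radius among all $H(4,3)$-free graphs with $m$ edges and no isolated vertices. Let $\mathbf{x}$ be the Perron vector of $G$, $u^*$ a vertex maximizing $x_{u^*}$, $N = N(u^* )$, and $A_+ = \{v\in N : d_N(v)\ge 1\}$. Then $A_+\neq\emptyset$, i.e. $N(u^* )$ spans at least one edge.
   Context: All graphs are simple and undirected; $\rho(G)$ is the largest adjacency eigenvalue and the Perron vector is the positive unit eigenvector for $\rho(G)$ (the extremal $G$ is connected). $H(4,3)$ is the graph formed by a cycle of length $4$ and a triangle sharing exactly one common vertex. $N(v)$ denotes the neighbourhood of $v$ and $d_S(v)=|N(v)\cap S|$. *)

From HB Require Import structures.
From mathcomp Require Import all_boot all_order all_algebra.
From mathcomp Require Import reals.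
Set Implicit Arguments. Unset Strict Implicit. Unset Printing Implicit Defensive.
Import Order.TTheory GRing.Theory Num.Theory.
Local Open Scope ring_scope.

Definition simple_graph (T : finType) (e : rel T) : Prop :=
  symmetric e /\ irreflexive e.

Definition nedges (T : finType) (e : rel T) : nat :=
  #|[set A : {set T} | [exists x, exists y, e x y && (A == [set x; y])]]|.

Definition no_isolated (T : finType) (e : rel T) : Prop :=
  forall v : T, exists w : T, e v w.

(* H(4,3): a 4-cycle 0-1-2-3-0 and a triangle 0-4-5-0 sharing vertex 0. *)
Definition H43_edge_list : seq (nat * nat) :=
  [:: (0, 1); (1, 2); (2, 3); (3, 0); (0, 4); (4, 5); (5, 0)]%N.

Definition H43_rel : rel 'I_6 :=
  fun i j => ((nat_of_ord i, nat_of_ord j) \in H43_edge_list)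
          || ((nat_of_ord j, nat_of_ord i) \in H43_edge_list).

Definition contains_H43 (T : finType) (e : rel T) : Prop :=
  exists f : 'I_6 -> T, injective f /\ forall i j, H43_rel i j -> e (f i) (f j).

Definition H43_free (T : finType) (e : rel T) : Prop := ~ contains_H43 e.

Definition adjmx (R : realType) (T : finType) (e : rel T) : 'M[R]_#|T| :=
  \matrix_(i, j) (e (enum_val i) (enum_val j))%:R.

Definition is_spectral_radius (R : realType) (T : finType) (e : rel T) (r : R) : Prop :=
  eigenvalue (adjmx R e) r /\
  forall l : R, eigenvalue (adjmx R e) l -> l <= r.

Definition extremal_H43 (R : realType) (m : nat) (T : finType) (e : rel T) : Prop :=
  [/\ simple_graph e, H43_free e, nedges e = m, no_isolated e &
   exists r : R, is_spectral_radius e r /\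
     forall (T' : finType) (e' : rel T') (r' : R),
       simple_graph e' -> H43_free e' -> nedges e' = m -> no_isolated e' ->
       is_spectral_radius e' r' -> r' <= r].

Definition perron_vector (R : realType) (T : finType) (e : rel T) (x : 'rV[R]_#|T|) : Prop :=
  exists r : R, [/\ is_spectral_radius e r,
    x *m adjmx R e = r *: x,
    forall i, 0 < x 0 i &
    \sum_i x 0 i ^+ 2 = 1].

From HB Require Import structures.
From mathcomp Require Import all_boot all_order all_algebra.
From mathcomp Require Import reals.
From mathcomp Require Import zify lra.
Set Implicit Arguments. Unset Strict Implicit. Unset Printing Implicit Defensive.
Import Order.TTheory GRing.Theory Num.Theory.
Local Open Scope ring_scope.

(* If N(u) spans no edge, every walk u - v - w with v in N(u) is determined by
   the edge vw, so rho^2 x_u = sum_{v ~ u} sum_{w ~ v} x_w <= m x_u, i.e.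
   rho^2 <= m.  On the other hand the book K_2 + sK_1 (s triangles sharing an
   edge) together with a disjoint edge is H(4,3)-free, has m = 2s + 2 edges and
   spectral radius lam with lam^2 = lam + 2s > m, contradicting extremality. *)

Section AdjacencySpectrum.

Variables (R : realType) (T : finType) (e : rel T).

Lemma sum_enum_val (F : T -> R) : \sum_(k < #|T|) F (enum_val k) = \sum_x F x.
Proof. by rewrite -(big_enum_val (A := T)). Qed.

Lemma mul_adjmx_enum_rank (v : 'rV[R]_#|T|) (j : T) :
  (v *m adjmx R e) 0 (enum_rank j) = \sum_i (e i j)%:R * v 0 (enum_rank i).
Proof.
rewrite !mxE -(sum_enum_val (fun i => (e i j)%:R * v 0 (enum_rank i))).
by apply: eq_bigr => k _; rewrite !mxE enum_valK enum_rankK mulrC.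
Qed.

Lemma adjmx_eigenE (v : 'rV[R]_#|T|) (l : R) : v *m adjmx R e = l *: v ->
  forall j, \sum_i (e i j)%:R * v 0 (enum_rank i) = l * v 0 (enum_rank j).
Proof. by move=> Hv j; rewrite -mul_adjmx_enum_rank Hv !mxE. Qed.

Lemma eigenvalue_adjmx (z : T -> R) (l : R) : (exists t, z t != 0) ->
  (forall j, \sum_i (e i j)%:R * z i = l * z j) -> eigenvalue (adjmx R e) l.
Proof.
move=> [t zt] Hz; apply/eigenvalueP; exists (\row_k z (enum_val k)).
  apply/rowP => k; rewrite -[k]enum_valK mul_adjmx_enum_rank !mxE enum_rankK -Hz.
  by apply: eq_bigr => i _; rewrite mxE enum_rankK.
by apply/negP => /eqP/rowP/(_ (enum_rank t)); rewrite !mxE enum_rankK; apply/eqP.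
Qed.

(* Collatz-Wielandt bound: a positive vector y with A y <= lam y bounds every
   eigenvalue, by comparing an eigenvector with y at the maximum of |v_i| / y_i. *)
Lemma eigenvalue_adjmx_le (y : T -> R) (l lam : R) : (forall t, 0 < y t) ->
  (forall j, \sum_i (e i j)%:R * y i <= lam * y j) ->
  eigenvalue (adjmx R e) l -> l <= lam.
Proof.
move=> y_gt0 Ay_le /eigenvalueP [v /adjmx_eigenE Hv nz].
pose w t := v 0 (enum_rank t).
have [t0 wt0] : exists t, w t != 0.
  apply/existsP; apply: contraR nz => /existsPn wn; apply/eqP/rowP => k.
  by move: (wn (enum_val k)); rewrite negbK /w enum_valK mxE => /eqP.
have [j _ wmax] := @arg_maxP _ R T t0 predT (fun i => `|w i| / y i) isT.
set c := `|w j| / y j in wmax.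
have w_le i : `|w i| <= c * y i by rewrite -ler_pdivrMr //; apply: wmax.
have c_gt0 : 0 < c.
  by apply: lt_le_trans (wmax t0 isT); rewrite divr_gt0 // normr_gt0.
have wj_gt0 : 0 < `|w j| by move: c_gt0; rewrite /c pmulr_lgt0 ?invr_gt0.
suff : `|l| * `|w j| <= lam * `|w j|.
  by rewrite ler_pM2r // => /(le_trans (ler_norm l)).
rewrite -normrM -Hv; apply: le_trans (ler_norm_sum _ _ _) _.
apply: le_trans (_ : \sum_i (e i j)%:R * (c * y i) <= _).
  apply: ler_sum => k _; rewrite normrM ger0_norm ?ler0n //.
  by rewrite ler_wpM2l ?ler0n ?w_le.
under eq_bigr do rewrite mulrCA.
rewrite -mulr_sumr; apply: le_trans (ler_wpM2l (ltW c_gt0) (Ay_le j)) _.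
by rewrite /c mulrCA divfK ?gt_eqF.
Qed.

End AdjacencySpectrum.

Lemma set2_eq (T : finType) (a b x y : T) : a != b ->
  ([set a; b] == [set x; y]) = ((a == x) && (b == y)) || ((a == y) && (b == x)).
Proof.
move=> ab; apply/idP/idP => [/eqP E|]; last first.
  by case/orP => /andP[/eqP-> /eqP->] //; rewrite setUC.
have : a \in [set x; y] by rewrite -E set21.
have : b \in [set x; y] by rewrite -E set22.
rewrite !inE => /orP[]/eqP hb /orP[]/eqP ha; subst;
  by rewrite ?eqxx ?orbT // in ab *.
Qed.

Section EdgeCounting.

Variables (T : finType) (e : rel T).
Hypothesis e_simple : simple_graph e.

Let E := [set A : {set T} | [exists x, exists y, e x y && (A == [set x; y])]].

Lemma mem_edge_set x y : e x y -> [set x; y] \in E.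
Proof.
by move=> exy; rewrite inE; apply/existsP; exists x; apply/existsP; exists y; rewrite exy eqxx.
Qed.

Lemma nedges_handshake : (2 * nedges e = \sum_x \sum_y (e x y : nat))%N.
Proof.
have [e_sym e_irr] := e_simple.
rewrite pair_bigA /= -big_mkcondr /=.
rewrite (partition_big (fun p : T * T => [set p.1; p.2]) (mem E)) /=; last first.
  by move=> [a b] /= /mem_edge_set.
rewrite /nedges -/E mulnC -sum1_card big_distrl /=.
apply: eq_bigr => A; rewrite inE => /existsP[x /existsP[y /andP[exy /eqP ->]]].
have xy : x != y by apply: contraTneq exy => ->; rewrite e_irr.
rewrite mul1n; apply/esym; transitivity #|[set (x, y); (y, x)]|; last first.
  by rewrite cards2 xpair_eqE (negbTE xy).
rewrite -sum1_card.
apply: eq_bigl => -[a b] /=; rewrite !inE !xpair_eqE.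
case eab: (e a b) => /=.
  by rewrite set2_eq //; apply: contraTneq eab => ->; rewrite e_irr.
apply/esym/negbTE; apply: contraFN eab => /orP[]/andP[/eqP-> /eqP->] //.
by rewrite e_sym.
Qed.

(* When N(u) spans no edge, [u - v - w] with [v] in N(u) is determined by the
   edge [vw]. *)
Lemma nbhd_degree_sum_le_nedges (u : T) :
  (forall v w, e u v -> e u w -> ~~ e v w) ->
  (\sum_(v | e u v) \sum_w (e v w : nat) <= nedges e)%N.
Proof.
have [_ e_irr] := e_simple; move=> indep.
set P := [set p : T * T | e u p.1 && e p.1 p.2].
have -> : (\sum_(v | e u v) \sum_w (e v w : nat) = #|P|)%N.
  rewrite -sum1_card pair_big_dep big_mkcond [RHS]big_mkcond /=.
  by apply: eq_bigr => -[v w] _; rewrite inE andbT /=; case: (e u v) (e v w) => -[].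
rewrite -(card_in_imset (f := fun p : T * T => [set p.1; p.2])); last first.
  move=> [a b] [c d]; rewrite !inE /= => /andP[ua eab] /andP[uc ecd] /eqP.
  have ab : a != b by apply: contraTneq eab => ->; rewrite e_irr.
  rewrite set2_eq // => /orP[]/andP[/eqP ad /eqP bc]; first by rewrite ad bc.
  by have := indep _ _ ua uc; rewrite -bc eab.
apply/subset_leq_card/subsetP => _ /imsetP[[a b] + ->].
by rewrite [_ \in P]inE => /andP[_ eab]; apply: mem_edge_set.
Qed.

End EdgeCounting.

Lemma eigen_sqr_le_nedges (R : realType) (T : finType) (e : rel T)
    (x : 'rV[R]_#|T|) (r : R) (u : T) :
  simple_graph e -> x *m adjmx R e = r *: x -> (forall i, 0 < x 0 i) ->
  (forall v, x 0 (enum_rank v) <= x 0 (enum_rank u)) ->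
  (forall v w, e u v -> e u w -> ~~ e v w) -> r ^+ 2 <= (nedges e)%:R.
Proof.
move=> e_simple /adjmx_eigenE x_eigen x_gt0 x_max indep; have [e_sym _] := e_simple.
pose w t := x 0 (enum_rank t).
have r_wu : r * w u = \sum_(v | e u v) w v.
  rewrite -x_eigen [RHS]big_mkcond; apply: eq_bigr => i _.
  by rewrite e_sym /w; case: (e u i); rewrite ?mul1r ?mul0r.
have wu_gt0 : 0 < w u by apply: x_gt0.
rewrite -(ler_pM2r wu_gt0) expr2 -mulrA r_wu mulr_sumr.
apply: le_trans (_ : \sum_(v | e u v) (\sum_i (e v i)%:R) * w u <= _).
  apply: ler_sum => v _; rewrite /w -x_eigen mulr_suml; apply: ler_sum => i _.
  by rewrite e_sym ler_wpM2l ?ler0n ?x_max.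
rewrite -mulr_suml ler_pM2r //.
have := nbhd_degree_sum_le_nedges e_simple indep; rewrite -(ler_nat R).
by apply: le_trans; rewrite natr_sum; apply: ler_sum => v _; rewrite natr_sum.
Qed.

(* Vertices 0 and 1 form the spine of the book, 4, ..., s + 3 are its pages
   and 2 - 3 is the extra edge. *)
Definition book_adj (i j : nat) : bool :=
  [|| (i < 2) && (j < 2) && (i != j), (i < 2) && (4 <= j), (4 <= i) && (j < 2),
      (i == 2) && (j == 3) | (i == 3) && (j == 2)]%N.

Definition book_graph (s : nat) : rel 'I_s.+4 := fun i j => book_adj i j.
Arguments book_graph : clear implicits.

Section BookGraph.
Local Open Scope nat_scope.

Lemma book_adjC i j : book_adj i j = book_adj j i.
Proof. by rewrite /book_adj; apply/idP/idP; lia. Qed.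

Lemma book_adj_page x i : 4 <= i -> book_adj x i = (x < 2).
Proof. by rewrite /book_adj => i4; apply/idP/idP; lia. Qed.

Lemma book_graph_simple s : simple_graph (book_graph s).
Proof.
split; first by move=> i j; rewrite /book_graph book_adjC.
by move=> i; rewrite /book_graph /book_adj; apply/negbTE; lia.
Qed.

Lemma book_graph_no_isolated s : no_isolated (book_graph s).
Proof.
move=> v; exists (inord (if v < 2 then 1 - v else if v < 4 then 5 - v else 0)).
by rewrite /book_graph inordK /book_adj; case: ifP => ?; try case: ifP => ?; lia.
Qed.

Lemma book_triangle x y z : book_adj x y -> book_adj y z -> book_adj z x ->
  [|| (x < 2) && (y < 2), (x < 2) && (z < 2) | (y < 2) && (z < 2)].
Proof. rewrite /book_adj; lia. Qed.

Lemma book_4cycle a b c d : book_adj a b -> book_adj b c -> book_adj c d ->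
  book_adj d a -> a != c -> b != d -> ((a < 2) && (c < 2)) || ((b < 2) && (d < 2)).
Proof. rewrite /book_adj; lia. Qed.

Lemma no_three_spine_vertices p q r :
  p < 2 -> q < 2 -> r < 2 -> p != q -> p != r -> q != r -> False.
Proof. lia. Qed.

Lemma book_graph_H43_free s : H43_free (book_graph s).
Proof.
move=> [f [f_inj f_hom]].
pose o k (lt_k6 : k < 6) := Ordinal lt_k6.
have d i j : i != j -> val (f i) != val (f j).
  by apply: contra => /eqP /val_inj /f_inj ->.
have tri := book_triangle (f_hom (o 0 isT) (o 4 isT) isT)
  (f_hom (o 4 isT) (o 5 isT) isT) (f_hom (o 5 isT) (o 0 isT) isT).
have cyc := book_4cycle (f_hom (o 0 isT) (o 1 isT) isT)
  (f_hom (o 1 isT) (o 2 isT) isT) (f_hom (o 2 isT) (o 3 isT) isT)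
  (f_hom (o 3 isT) (o 0 isT) isT) (d (o 0 isT) (o 2 isT) isT) (d (o 1 isT) (o 3 isT) isT).
case/or3P: tri => /andP[h1 h2]; case/orP: cyc => /andP[h3 h4];
  first [ by apply: (no_three_spine_vertices h1 h2 h3); apply: d
        | by apply: (no_three_spine_vertices h1 h2 h4); apply: d ].
Qed.

Lemma big_ord_split4 (R : Type) (idx : R) (op : R -> R -> R) (F : nat -> R) s :
  \big[op/idx]_(i < s.+4) F i =
  op (F 0) (op (F 1) (op (F 2) (op (F 3) (\big[op/idx]_(4 <= i < s.+4) F i)))).
Proof. by rewrite -(big_mkord xpredT) big_ltn // big_ltn // big_ltn // big_ltn. Qed.

Lemma book_graph_nedges s : nedges (book_graph s) = 2 * s + 2.
Proof.
have := nedges_handshake (book_graph_simple s).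
have row_sum x : \sum_(y < s.+4) book_adj x y =
    book_adj x 0 + (book_adj x 1 + (book_adj x 2 + (book_adj x 3 + s * (x < 2)))).
  rewrite (big_ord_split4 _ _ (fun y => nat_of_bool (book_adj x y))).
  rewrite (eq_big_nat _ _ (F2 := fun _ => nat_of_bool (x < 2))).
    by rewrite sum_nat_const_nat subSS subSS subSS subSS subn0.
  by move=> i /andP[i4 _]; rewrite book_adj_page.
under eq_bigr => x _ do rewrite row_sum.
rewrite (big_ord_split4 _ _ (fun x => book_adj x 0 + (book_adj x 1 +
  (book_adj x 2 + (book_adj x 3 + s * (x < 2)))))).
rewrite (eq_big_nat _ _ (F2 := fun _ => 2)); last first.
  by move=> i /andP[i4 _]; rewrite !(book_adjC i) !book_adj_page //; lia.
rewrite sum_nat_const_nat subSS subSS subSS subSS subn0 /=; lia.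
Qed.

End BookGraph.

Section BookSpectrum.

Variables (R : realType) (s : nat).

Lemma book_colsum (F : nat -> R) (j : nat) : (forall i, (4 <= i)%N -> F i = 1) ->
  \sum_(i < s.+4) (book_adj i j)%:R * F i =
  (book_adj 0 j)%:R * F 0%N + ((book_adj 1 j)%:R * F 1%N +
  ((book_adj 2 j)%:R * F 2%N + ((book_adj 3 j)%:R * F 3%N + (j < 2)%N%:R *+ s))).
Proof.
move=> F_pages; rewrite (big_ord_split4 _ _ (fun i => (book_adj i j)%:R * F i)).
rewrite (eq_big_nat _ _ (F2 := fun _ => (j < 2)%N%:R)); last first.
  by move=> i /andP[i4 _]; rewrite F_pages // mulr1 book_adjC book_adj_page.
by rewrite sumr_const_nat subSS subSS subSS subSS subn0.
Qed.

(* The eigenvector is lam/2 on the spine, 1 on the pages and 0 on the extra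
   edge; raising the extra edge to 1 gives a positive vector [y] with
   [A y <= lam y] as soon as [lam >= 1]. *)
Lemma book_graph_spectral_radius (lam : R) :
  lam ^+ 2 = lam + 2 * s%:R -> 2 < lam -> is_spectral_radius (book_graph s) lam.
Proof.
move=> lam_eq lam_gt2.
pose z k : R := if (k < 2)%N then lam / 2 else if (k < 4)%N then 0 else 1.
pose y k : R := if (k < 2)%N then lam / 2 else 1.
have z_pages i : (4 <= i)%N -> z i = 1.
  by move=> i4; rewrite /z ltnNge (leq_trans _ i4) // ltnNge i4.
have y_pages i : (4 <= i)%N -> y i = 1.
  by move=> i4; rewrite /y ltnNge (leq_trans _ i4).
split.
  apply: (@eigenvalue_adjmx _ _ _ (fun i : 'I_s.+4 => z i)).
    by exists ord0; rewrite /z /=; apply/eqP; lra.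
  move=> j; rewrite /book_graph book_colsum //.
  by case: j => -[|[|[|[|k]]]] hj; rewrite /z /book_adj /=; lra.
move=> l; apply: (@eigenvalue_adjmx_le _ _ _ (fun i : 'I_s.+4 => y i)).
  by move=> t; rewrite /y; case: ifP => _; lra.
move=> j; rewrite /book_graph book_colsum //.
by case: j => -[|[|[|[|k]]]] hj; rewrite /y /book_adj /=; lra.
Qed.

Lemma book_graph_spectral_radius_gt : (2 <= s)%N ->
  exists2 lam : R, is_spectral_radius (book_graph s) lam &
    0 < lam /\ (2 * s + 2)%N%:R < lam ^+ 2.
Proof.
move=> s_ge2; have s_ge2R : 2 <= s%:R :> R by rewrite (ler_nat R 2 s).
set q := Num.sqrt (1 + 8 * s%:R : R).
have q_ge0 : 0 <= q by apply: sqrtr_ge0.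
have q_sqr : q ^+ 2 = 1 + 8 * s%:R by rewrite sqr_sqrtr // addr_ge0 ?mulr_ge0 ?ler0n.
have q_gt3 : 3 < q.
  rewrite ltNge; apply/negP => q_le3.
  have : q ^+ 2 <= 9 by rewrite expr2; nra.
  by rewrite q_sqr; lra.
have lam_eq : ((1 + q) / 2) ^+ 2 = (1 + q) / 2 + 2 * s%:R.
  by move: q_sqr; rewrite !expr2 => q_sqr; lra.
exists ((1 + q) / 2); first by apply: book_graph_spectral_radius => //; lra.
by rewrite lam_eq natrD natrM; split; lra.
Qed.

End BookSpectrum.

Theorem claim1 (R : realType) (m : nat) (T : finType) (e : rel T)
  (x : 'rV[R]_#|T|) (ustar : T) :
  (38 <= m)%N -> ~~ odd m ->
  extremal_H43 R m e ->
  perron_vector e x ->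
  (forall v : T, x 0 (enum_rank v) <= x 0 (enum_rank ustar)) ->
  exists v : T, exists w : T, [/\ e ustar v, e ustar w & e v w].
Proof.
move=> m_ge38 m_even [e_simple _ e_nedges _ [r [[r_eig _] r_max]]].
move=> [r1 [[_ r1_max] x_eigen x_gt0 _]] x_max.
have [s m_eq] : exists s, m = (2 * s + 2)%N.
  by exists (m./2 - 1)%N; move: (odd_double_half m); rewrite (negbTE m_even); lia.
have [lam lam_rad [lam_gt0 lam_big]] := @book_graph_spectral_radius_gt R s ltac:(lia).
have lam_le_r : lam <= r.
  apply: r_max lam_rad; rewrite ?book_graph_nedges ?m_eq //.
  - exact: book_graph_simple.
  - exact: book_graph_H43_free.
  - exact: book_graph_no_isolated.
have r_le_r1 : r <= r1 := r1_max r r_eig.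
case: (boolP [exists v, exists w, [&& e ustar v, e ustar w & e v w]]).
  by move=> /existsP[v /existsP[w /and3P[]]]; exists v, w.
move=> /existsPn no_triangle; exfalso.
have indep v w : e ustar v -> e ustar w -> ~~ e v w.
  by move=> uv uw; have /existsPn/(_ w) := no_triangle v; rewrite uv uw.
have := eigen_sqr_le_nedges e_simple x_eigen x_gt0 x_max indep.
rewrite e_nedges m_eq; nra.
Qed.
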